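(* Let $k\leq n-2$ and $m\geq1$, or let $k=n-1$ and $m\geq2$. If $G$ is minor maximal amongst graphs with $n$ vertices, at most $m$ parallel edges between any given pair of vertices, and spectator floor $k$, then $G$ is an $m$-saturated crowded $(n-k)$-parade.
   Context: All graphs are finite, have at least one vertex, have no loops, and may have multiple (parallel) edges. A minor of $H$ is any graph obtained from $H$ by a sequence of: deleting an isolated vertex, deleting an edge, contracting an edge that has no edge parallel to it. A graph $G$ in a class $\mathcal{C}$ is minor maximal in $\mathcal{C}$ if no graph in $\mathcal{C}$ other than $G$ has $G$ as a minor. A unique shortest path is a shortest $u$–$v$ path $P$ such that every $u$–$v$ path with the same number of vertices is identical to $P$, where two paths with different edge sequences are different even if their vertex sequences agree; a single vertex is a unique shortest path. The parade number $\mathrm{usp}(G)$ is the largest number of vertices of a unique shortest path in $G$; a parade is a unique shortest path with $\mathrm{usp}(G)$ vertices. The spectator number is $\mathrm{sp}(G)=|V(G)|-\mathrm{usp}(G)$. The spectator floor $\lfloor \mathrm{sp}\rfloor(G)$ is the minimum of $\mathrm{sp}(H)$ over all graphs $H$ of which $G$ is a minor. For $p\geq2$, a crowded $p$-parade is a graph $G$ with a parade $P$ of $p$ vertices such that (i) every vertex outside $P$ is adjacent to exactly two vertices of $P$, and those two vertices are adjacent to each other; (ii) any two vertices outside $P$ that are adjacent to a common vertex of $P$ are adjacent to each other. An $m$-saturated crowded $p$-parade ($p\geq 2$) is a crowded $p$-parade in which every edge not in the parade has exactly $m$ parallel copies (including itself). A crowded $1$-parade is a graph whose simplification is complete; an $m$-saturated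 crowded $1$-parade is a graph in which every pair of vertices is joined by exactly $m$ edges. *)

From mathcomp Require Import all_boot.
From mathcomp Require Import boolp.

Set Implicit Arguments.
Unset Strict Implicit.
Unset Printing Implicit Defensive.

(* A finite loopless multigraph with at least one vertex, given up to
   isomorphism by its vertex set 'I_nv and the number of (parallel) edges
   between each pair of vertices.  The edges between a and b are the
   labelled edges (a,b,l) with l < mul a b  (labels are symmetric). *)
Record mgraph := MGraph {
  nv : nat;
  mul : 'I_nv -> 'I_nv -> nat;
  mul_sym : forall a b, mul a b = mul b a;
  mul_irr : forall a, mul a a = 0;
  nv_gt0 : 0 < nv }.

Definition adj (G : mgraph) (a b : 'I_(nv G)) : bool := 0 < mul a b.

Definition steps (G : mgraph) (vs : seq 'I_(nv G)) (ls : seq nat) :=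
  zip (zip vs (behead vs)) ls.

Definition is_path (G : mgraph) (vs : seq 'I_(nv G)) (ls : seq nat) : Prop :=
  [/\ vs != [::], uniq vs, size ls = (size vs).-1 &
      all (fun t => t.2 < mul t.1.1 t.1.2) (steps vs ls)].

Definition same_ends (G : mgraph) (vs vs' : seq 'I_(nv G)) : Prop :=
  ohead vs' = ohead vs /\ ohead (rev vs') = ohead (rev vs).

Definition is_usp (G : mgraph) (vs : seq 'I_(nv G)) (ls : seq nat) : Prop :=
  is_path vs ls /\
  forall vs' ls', is_path vs' ls' -> same_ends vs vs' ->
    size vs <= size vs' /\ (size vs' = size vs -> vs' = vs /\ ls' = ls).

Definition usp (G : mgraph) : nat :=
  \max_(p < (nv G).+1 | `[< exists vs ls, @is_usp G vs ls /\ size vs = p >]) p.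

Definition is_parade (G : mgraph) (vs : seq 'I_(nv G)) (ls : seq nat) : Prop :=
  is_usp vs ls /\ size vs = usp G.

Definition sp (G : mgraph) : nat := nv G - usp G.

Definition iso (H G : mgraph) : Prop :=
  exists f : 'I_(nv H) -> 'I_(nv G),
    bijective f /\ forall u w, mul (f u) (f w) = mul u w.

Definition del_edge (H G : mgraph) : Prop :=
  exists f : 'I_(nv H) -> 'I_(nv G), bijective f /\
  exists a b, 0 < mul a b /\
    forall u w, mul (f u) (f w) =
      mul u w - (((u == a) && (w == b)) || ((u == b) && (w == a))).

Definition del_isolated (H G : mgraph) : Prop :=
  exists x : 'I_(nv H), (forall y, mul x y = 0) /\
  exists f : 'I_(nv H) -> 'I_(nv G),
    (forall u w, u != x -> w != x -> f u = f w -> u = w) /\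
    (forall y, exists2 u, u != x & f u = y) /\
    (forall u w, u != x -> w != x -> mul (f u) (f w) = mul u w).

Definition contract (H G : mgraph) : Prop :=
  exists a b : 'I_(nv H), mul a b = 1 /\
  exists f : 'I_(nv H) -> 'I_(nv G),
    (forall y, exists u, f u = y) /\ f a = f b /\
    (forall u w, f u = f w -> [\/ u = w, u = a /\ w = b | u = b /\ w = a]) /\
    (forall x y, x != y ->
       mul x y = \sum_(u | f u == x) \sum_(w | f w == y) mul u w).

Definition minor_step (H G : mgraph) : Prop :=
  [\/ iso H G, del_edge H G, del_isolated H G | contract H G].

(* is_minor G H : G is a minor of H *)
Inductive is_minor (G : mgraph) : mgraph -> Prop :=
| minor_refl : is_minor G G
| minor_cons H H' : minor_step H H' -> is_minor G H' -> is_minor G H.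

Lemma spfloor_ex (G : mgraph) :
  exists s, (fun s => `[< exists H, is_minor G H /\ sp H = s >]) s.
Proof. exists (sp G); apply/asboolP; exists G; split=> //; exact: minor_refl. Qed.

Definition spfloor (G : mgraph) : nat := ex_minn (spfloor_ex G).

Definition minor_maximal (C : mgraph -> Prop) (G : mgraph) : Prop :=
  C G /\ forall H, C H -> is_minor G H -> iso H G.

Definition in_parade (G : mgraph) (vs : seq 'I_(nv G)) (ls : seq nat)
  (a b : 'I_(nv G)) (l : nat) : bool :=
  (((a, b), l) \in steps vs ls) || (((b, a), l) \in steps vs ls).

Definition sat_crowded_parade (G : mgraph) (m p : nat) : Prop :=
  (p = 1 /\ forall a b : 'I_(nv G), a != b -> mul a b = m) \/
  (2 <= p /\ exists (vs : seq 'I_(nv G)) ls, [/\ is_parade vs ls, size vs = p,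
     (forall v, v \notin vs ->
        #|[set x | (x \in vs) && adj v x]| = 2 /\
        forall x y, x \in vs -> y \in vs -> adj v x -> adj v y -> x != y ->
          adj x y),
     (forall u v x, u \notin vs -> v \notin vs -> u != v -> x \in vs ->
        adj u x -> adj v x -> adj u v) &
     (forall a b l, l < mul a b -> ~~ in_parade vs ls a b l -> mul a b = m)]).

Definition the_class (n m k : nat) (G : mgraph) : Prop :=
  [/\ nv G = n, (forall a b : 'I_(nv G), mul a b <= m) & spfloor G = k].

(* A leveling of a multigraph assigns levels 0 .. 2p-2 to its vertices so that adjacent
   vertices are at most two levels apart, each even level 2i is carried by exactly one vertex
   (the i-th parade vertex), and two parade vertices share at most one edge.  If H realises the
   spectator floor k of G, a parade of H with p = |H| - k vertices yields a leveling of H: the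
   i-th parade vertex gets level 2i, any other vertex at walk distance d from the start of the
   parade gets 2d - 1.  The bound |X| <= p + k survives every minor operation as long as k + 2
   vertices remain, since a deleted or contracted vertex costs at most one parade level, which
   is collapsed onto the neighbouring odd levels.  Hence G has a leveling with p = n - k levels.
   Putting one edge between consecutive parade vertices and m edges between any other two
   vertices at most two levels apart gives an m-saturated crowded p-parade containing G with
   spectator floor k, which by maximality is G.  For k = n - 1 the complete m-multigraph plays
   the same role. *)

From mathcomp Require Import all_boot boolp zify.

Set Implicit Arguments.
Unset Strict Implicit.
Unset Printing Implicit Defensive.

Lemma is_minor_trans A B C : is_minor A B -> is_minor B C -> is_minor A C.
Proof. by move=> hAB; elim=> // H H' st _ /(minor_cons st). Qed.

Lemma card_le_surj (T T' : finType) (f : T -> T') :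
  (forall y, exists u, f u = y) -> #|T'| <= #|T|.
Proof.
move=> fsurj; apply: leq_trans (leq_image_card f T).
by apply/subset_leq_card/subsetP => y _; case: (fsurj y) => u <-; apply: image_f.
Qed.

Lemma card_lt_inj_miss (T T' : finType) (h : T -> T') (o : T') :
  injective h -> (forall y, h y != o) -> #|T| < #|T'|.
Proof.
move=> hinj hmiss; rewrite -(card_image hinj).
have : #|[set~ o]| < #|T'| by rewrite cardsC1 prednK //; apply/card_gt0P; exists o.
apply: leq_ltn_trans; apply/subset_leq_card/subsetP => _ /imageP[y _ ->].
by rewrite !inE hmiss.
Qed.

Lemma minor_step_nv H H' : minor_step H H' -> nv H' <= nv H.
Proof.
rewrite -[nv H]card_ord -[nv H']card_ord.
case=> [[f [fb _]] | [f [fb _]] | [x [_ [f [_ [fsurj _]]]]] | [a [b [_ [f [fsurj _]]]]]].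
- by rewrite (bij_eq_card fb).
- by rewrite (bij_eq_card fb).
- by apply: (card_le_surj (f := f)) => y; case: (fsurj y) => u _ <-; exists u.
- exact: card_le_surj fsurj.
Qed.

Lemma is_minor_nv G H : is_minor G H -> nv G <= nv H.
Proof. by elim=> // H1 H2 /minor_step_nv st _ /leq_trans; apply. Qed.

Lemma spfloor_le_sp G H : is_minor G H -> spfloor G <= sp H.
Proof. by move=> hGH; rewrite /spfloor; case: ex_minnP => s _; apply; apply/asboolP; exists H. Qed.

Lemma spfloor_witness G : exists2 H, is_minor G H & sp H = spfloor G.
Proof. by rewrite /spfloor; case: ex_minnP => s /asboolP[H []]; exists H. Qed.

Lemma spfloor_minor G G' : is_minor G G' -> spfloor G <= spfloor G'.
Proof.
move=> hGG'; have [H hG'H <-] := spfloor_witness G'.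
exact/spfloor_le_sp/(is_minor_trans hGG').
Qed.

Lemma usp_le_nv G : usp G <= nv G.
Proof. by apply/bigmax_leqP => i _; rewrite -ltnS. Qed.

Lemma path_size_le G vs ls : @is_path G vs ls -> size vs <= nv G.
Proof.
case=> _ vs_uniq _ _; apply: leq_trans (_ : size (enum 'I_(nv G)) <= _).
  by apply: uniq_leq_size => // x _; rewrite mem_enum.
by rewrite size_enum_ord.
Qed.

Lemma all_stepsP G (vs : seq 'I_(nv G)) ls x : size ls = (size vs).-1 ->
  reflect (forall j, j < size ls -> nth 0 ls j < mul (nth x vs j) (nth x vs j.+1))
          (all (fun t => t.2 < mul t.1.1 t.1.2) (steps vs ls)).
Proof.
move=> hs; have hsz : size (steps vs ls) = size ls by rewrite /steps !size_zip size_behead hs; lia.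
have nth_steps j : j < size ls ->
    nth (x, x, 0) (steps vs ls) j = (nth x vs j, nth x vs j.+1, nth 0 ls j).
  move=> hj; rewrite /steps nth_zip_cond !size_zip size_behead hs ifT /=; last lia.
  by rewrite nth_zip_cond size_zip size_behead ifT /= ?nth_behead //; lia.
apply: (iffP (all_nthP (x, x, 0))) => h j hj; first by have := h j; rewrite hsz nth_steps //; apply.
by rewrite nth_steps -?hsz //; apply: h; rewrite -hsz.
Qed.

Lemma usp_ge_size G vs ls : @is_usp G vs ls -> size vs <= usp G.
Proof.
move=> husp; have hlt : size vs < (nv G).+1 by rewrite ltnS (path_size_le husp.1).
by apply: (leq_bigmax_cond (Ordinal hlt)); apply/asboolP; exists vs, ls.
Qed.

Lemma is_usp_vertex G (v : 'I_(nv G)) : is_usp [:: v] [::].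
Proof.
split=> [|vs ls [vs_nil _ hsz _] [hhead _]]; first by split.
case: vs vs_nil hsz hhead => // x [|y s] //= _ hsz [->].
by case: ls hsz.
Qed.

Lemma parade_exists G : exists vs ls, @is_parade G vs ls.
Proof.
pose v : 'I_(nv G) := Ordinal (nv_gt0 G).
have [|p] := @eq_bigmax_cond _
  (fun p : 'I_(nv G).+1 => `[< exists vs ls, @is_usp G vs ls /\ size vs = p >]) val.
  have h1 : 1 < (nv G).+1 by rewrite ltnS nv_gt0.
  apply/card_gt0P; exists (Ordinal h1); apply/asboolP.
  by exists [:: v], [::]; split=> //; apply: is_usp_vertex.
by move=> /asboolP[vs [ls [husp hsz]]] hp; exists vs, ls; split; rewrite // /usp hp.
Qed.

Definition msum N (M : 'I_N -> 'I_N -> nat) : nat := \sum_u \sum_w M u w.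

Lemma sum_lt_pointwise (T : finType) (F F' : T -> nat) j :
  (forall i, F i <= F' i) -> F j < F' j -> \sum_i F i < \sum_i F' i.
Proof.
move=> hle hj; rewrite (bigD1 j) // [X in _ < X](bigD1 j) //= -addSn.
by rewrite leq_add //; apply: leq_sum.
Qed.

Lemma msum_lt N (M M' : 'I_N -> 'I_N -> nat) a b :
  (forall u w, M u w <= M' u w) -> M a b < M' a b -> msum M < msum M'.
Proof.
move=> hle hab; apply: (sum_lt_pointwise (j := a)) => [u|]; last exact: sum_lt_pointwise hab.
exact: leq_sum.
Qed.

Lemma eq_of_le_msum N (M M' : 'I_N -> 'I_N -> nat) :
  (forall u w, M u w <= M' u w) -> msum M' <= msum M -> M = M'.
Proof.
move=> hle hsum; apply/funext => u; apply/funext => w; apply/eqP.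
by rewrite eqn_leq hle leqNgt; apply: contraTN hsum => /(msum_lt hle); rewrite -ltnNge.
Qed.

Lemma mgraph_ext N (M M' : 'I_N -> 'I_N -> nat) s i p s' i' p' :
  M = M' -> @MGraph N M s i p = @MGraph N M' s' i' p'.
Proof.
move=> eM; subst M'.
by rewrite (Prop_irrelevance s s') (Prop_irrelevance i i') (Prop_irrelevance p p').
Qed.

Lemma mgraph_eta (G : mgraph) M s i : @mul G = M -> G = @MGraph (nv G) M s i (nv_gt0 G).
Proof. by case: G M s i => N M0 s0 i0 p0 M s i /=; apply: mgraph_ext. Qed.

Lemma iso_msum H G : iso H G -> msum (@mul H) = msum (@mul G).
Proof.
case=> f [fb hf]; rewrite /msum (reindex _ (onW_bij _ fb)); apply: eq_bigr => u _.
by rewrite (reindex _ (onW_bij _ fb)); apply: eq_bigr => w _; rewrite hf.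
Qed.

Lemma minor_of_le_mul (G : mgraph) M' s' i' :
  (forall u w, mul u w <= M' u w) -> is_minor G (@MGraph (nv G) M' s' i' (nv_gt0 G)).
Proof.
case: G M' s' i' => N M s i p /= M' s' i'.
have [d] := ubnP (msum M'); elim: d M' s' i' => // d IH M' s' i' hd hle.
case: (boolP [exists a, exists b, M a b < M' a b]) => [/existsP[a /existsP[b hab]]|]; last first.
  rewrite negb_exists => /forallP hno; rewrite (@mgraph_ext _ M' M _ _ _ s i p).
    exact: minor_refl.
  apply/esym/eq_of_le_msum => //; apply: leq_sum => u _; apply: leq_sum => w _.
  by move: (hno u); rewrite negb_exists => /forallP/(_ w); rewrite -leqNgt.
pose e u w := ((u == a) && (w == b)) || ((u == b) && (w == a)).
pose M'' u w := M' u w - e u w.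
have s'' u w : M'' u w = M'' w u.
  by rewrite /M'' /e s' orbC (andbC (w == a)) (andbC (w == b)).
have i'' u : M'' u u = 0 by rewrite /M'' i'.
have hle'' u w : M u w <= M'' u w.
  have [|/negbTE he] := boolP (e u w); last by rewrite /M'' he subn0.
  by move=> /orP[] /andP[/eqP-> /eqP->]; rewrite /M'' /e ?(s b a) ?(s' b a) !eqxx /=; lia.
apply: (minor_cons (H' := MGraph s'' i'' p)).
  by apply: Or42; exists id; split; [exists id | exists a, b; split=> //; apply: leq_ltn_trans hab].
apply: IH hle''; rewrite -ltnS; apply: leq_trans hd; apply: (msum_lt (a := a) (b := b)) => [u w|].
  exact: leq_subr.
by rewrite /M'' /e !eqxx /=; move: hab; lia.
Qed.

Lemma iso_le_mul_eq (G : mgraph) M s i :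
  (forall u w, mul u w <= M u w) -> iso (@MGraph (nv G) M s i (nv_gt0 G)) G -> @mul G = M.
Proof. by move=> hle /iso_msum hsum; apply: eq_of_le_msum; rewrite // -hsum. Qed.

Lemma maximal_le_mul_eq n m k (G : mgraph) M s i :
  minor_maximal (the_class n m k) G ->
  (forall u w, mul u w <= M u w) -> (forall u w, M u w <= m) ->
  sp (@MGraph (nv G) M s i (nv_gt0 G)) <= k -> @mul G = M.
Proof.
move=> [[hn _ hk] hmax] hle hm hsp; have hGK := minor_of_le_mul s i hle.
apply: iso_le_mul_eq => //; apply: hmax (hGK); split=> //.
apply/eqP; rewrite eqn_leq -{2}hk (spfloor_minor hGK) andbT.
exact: leq_trans (spfloor_le_sp (minor_refl _)) hsp.
Qed.

Definition ndist (a b : nat) : nat := (a - b) + (b - a).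

Lemma ndistC a b : ndist a b = ndist b a. Proof. by rewrite /ndist addnC. Qed.

Definition level_ok (p t : nat) : bool := t + odd t + 2 <= 2 * p.

(* Relabelling after parade level 2r disappears: the other even levels are renumbered
   consecutively, while 2r-1, 2r and 2r+1 collapse to one odd level, clamped to the range of
   the p-1 remaining parade levels. *)
Definition drop_level (p r t : nat) : nat :=
  if ~~ odd t && (t != 2 * r) then (if t < 2 * r then t else t - 2)
  else 2 * minn (if t < 2 * r then t./2 else t./2 - 1) (p - 3) + 1.

Lemma nat_parity t : {q | t = 2 * q} + {q | t = 2 * q + 1}.
Proof.
by case: (boolP (odd t)) => ht; [right | left]; exists t./2;
  move: (odd_double_half t); rewrite ?(negbTE ht) /=; lia.
Qed.

Lemma even_half t : ~~ odd t -> t = 2 * t./2.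
Proof. by move=> /negbTE ht; move: (odd_double_half t); rewrite ht; lia. Qed.

Lemma odd_2n q : odd (2 * q) = false. Proof. by rewrite oddM. Qed.
Lemma odd_2n1 q : odd (2 * q + 1). Proof. by rewrite oddD oddM. Qed.
Lemma half_2n q : (2 * q)./2 = q. Proof. by rewrite mul2n doubleK. Qed.
Lemma half_2n1 q : (2 * q + 1)./2 = q.
Proof. by rewrite addn1 mul2n -[(q.*2).+1]/(odd true + q.*2) half_bit_double. Qed.

Ltac case_parity t :=
  let q := fresh "q" in case: (nat_parity t) => [[q ->]|[q ->]].

Ltac level_arith :=
  rewrite /ndist /level_ok /drop_level ?odd_2n ?odd_2n1 ?half_2n ?half_2n1 /=;
  repeat (case: ifP => /= ?); intros; lia.

Lemma drop_level_ndist p r t t' : 3 <= p -> r < p -> level_ok p t -> level_ok p t' ->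
  ndist t t' <= 2 -> ndist (drop_level p r t) (drop_level p r t') <= 2.
Proof. by case_parity t; case_parity t'; level_arith. Qed.

Lemma drop_level_ok p r t : 3 <= p -> r < p -> level_ok p t -> level_ok (p - 1) (drop_level p r t).
Proof. by case_parity t; level_arith. Qed.

Lemma odd_drop_level p r t : odd (drop_level p r t) = ~~ (~~ odd t && (t != 2 * r)).
Proof.
rewrite /drop_level; case: ifP => [/andP[ht hr]|_]; last by rewrite odd_2n1.
move: ht hr; case_parity t; rewrite ?odd_2n ?odd_2n1 // => _ hr.
by case: ifP => _; rewrite ?odd_2n // (_ : 2 * q - 2 = 2 * (q - 1)) ?odd_2n //; lia.
Qed.

Lemma drop_level_even_inj p r t t' : ~~ odd (drop_level p r t) ->
  drop_level p r t = drop_level p r t' -> t = t' /\ ~~ odd t.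
Proof.
rewrite odd_drop_level negbK => /andP[ht hr] e.
have := odd_drop_level p r t'; rewrite -e odd_drop_level ht hr /= => /esym/negbFE/andP[ht' hr'].
by split=> //; move: e ht hr ht' hr'; case_parity t; case_parity t'; level_arith.
Qed.

Lemma drop_level_onto p r i : i < p - 1 -> r < p ->
  [/\ i + (r <= i) < p, 2 * (i + (r <= i)) != 2 * r & drop_level p r (2 * (i + (r <= i))) = 2 * i].
Proof. by move=> hi hr; case: (leqP r i) => hri; split; level_arith. Qed.

Lemma drop_level_pred p r t : 1 <= r -> r < p -> 3 <= p -> level_ok p t -> ndist t (2 * r) <= 2 ->
  ndist (drop_level p r (2 * r - 2)) (drop_level p r t) <= 2.
Proof.
have -> : 2 * r - 2 = 2 * (r - 1) by lia.
by case_parity t; level_arith.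
Qed.

Lemma drop_level_near p r s : odd s -> ndist s (2 * r) <= 1 ->
  drop_level p r s = drop_level p r (2 * r).
Proof. by case_parity s; level_arith. Qed.

Record leveling (k : nat) (X : mgraph) (lam : 'I_(nv X) -> nat) (p : nat) : Prop := Leveling {
  leveling_adj : forall u w, 0 < mul u w -> ndist (lam u) (lam w) <= 2;
  leveling_simple : forall u w, ~~ odd (lam u) -> ~~ odd (lam w) -> mul u w <= 1;
  leveling_inj : forall u w, ~~ odd (lam u) -> lam u = lam w -> u = w;
  leveling_range : forall u, level_ok p (lam u);
  leveling_onto : forall i, i < p -> exists u, lam u = 2 * i;
  leveling_nv : nv X <= p + k }.

Definition levelable (k : nat) (X : mgraph) : Prop := exists lam p, @leveling k X lam p.

Lemma leveling_transfer k X Y lam p p' (h : 'I_(nv Y) -> 'I_(nv X)) (g : nat -> nat) :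
  leveling k lam p -> injective h ->
  (forall y y', 0 < mul y y' -> ndist (g (lam (h y))) (g (lam (h y'))) <= 2) ->
  (forall y y', ~~ odd (g (lam (h y))) -> ~~ odd (g (lam (h y'))) -> mul y y' <= 1) ->
  (forall t, level_ok p t -> level_ok p' (g t)) ->
  (forall t t', ~~ odd (g t) -> g t = g t' -> t = t' /\ ~~ odd t) ->
  (forall i, i < p' -> exists y, g (lam (h y)) = 2 * i) ->
  nv Y <= p' + k -> levelable k Y.
Proof.
move=> hlev hinj hadj hsimple hrange hinjg honto hnv.
exists (fun y => g (lam (h y))), p'; split=> // [y y' hy /(hinjg _ _ hy)[e hy']|y].
  exact/hinj/(leveling_inj hlev hy' e).
exact/hrange/(leveling_range hlev).
Qed.

Lemma levelable_bij k X Y (f : 'I_(nv X) -> 'I_(nv Y)) :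
  bijective f -> (forall u w, mul (f u) (f w) <= mul u w) -> levelable k X -> levelable k Y.
Proof.
move=> [fi fK fiK] hmul [lam [p hlev]].
have hmul' y y' : mul y y' <= mul (fi y) (fi y') by rewrite -{1}(fiK y) -{1}(fiK y').
apply: (leveling_transfer (p' := p) (g := id) hlev (can_inj fiK)) => //.
- by move=> y y' /leq_trans/(_ (hmul' y y'))/(leveling_adj hlev).
- by move=> y y' hy hy'; apply: leq_trans (hmul' y y') (leveling_simple hlev hy hy').
- by move=> i /(leveling_onto hlev)[u hu]; exists (f u); rewrite fK.
- rewrite -[nv Y]card_ord; apply: leq_trans (leveling_nv hlev).
  by rewrite -[nv X]card_ord; apply: leq_card (can_inj fiK).
Qed.

Section RemoveVertex.
Variables (k : nat) (X Y : mgraph) (lam : 'I_(nv X) -> nat) (p : nat).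
Variables (h : 'I_(nv Y) -> 'I_(nv X)) (o : 'I_(nv X)).
Hypothesis hlev : leveling k lam p.
Hypothesis h_inj : injective h.
Hypothesis h_miss : forall y, h y != o.
Hypothesis h_onto : forall u, u != o -> exists y, h y = u.
Hypothesis hnvY : k + 2 <= nv Y.

Lemma remove_nv : nv Y < nv X.
Proof. by rewrite -[nv Y]card_ord -[nv X]card_ord; apply: card_lt_inj_miss h_inj h_miss. Qed.

Lemma remove_levels_ge3 : 3 <= p.
Proof. by have := remove_nv; have := leveling_nv hlev; lia. Qed.

Lemma levelable_remove_odd : odd (lam o) ->
  (forall y y', 0 < mul y y' -> ndist (lam (h y)) (lam (h y')) <= 2) ->
  (forall y y', ~~ odd (lam (h y)) -> ~~ odd (lam (h y')) -> mul y y' <= 1) ->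
  levelable k Y.
Proof.
move=> ho hadj hsimple; clear hnvY.
apply: (leveling_transfer (p' := p) (g := id) hlev h_inj) => //.
- move=> i /(leveling_onto hlev)[u hu].
  have [|y hy] := h_onto (u := u); last by exists y; rewrite hy.
  by apply: contraTneq ho => <-; rewrite hu odd_2n.
- by have := remove_nv; have := leveling_nv hlev; lia.
Qed.

Lemma levelable_remove_level r : r < p -> odd (lam o) || (lam o == 2 * r) ->
  (forall y y', 0 < mul y y' ->
     ndist (drop_level p r (lam (h y))) (drop_level p r (lam (h y'))) <= 2) ->
  (forall y y', ~~ odd (drop_level p r (lam (h y))) ->
     ~~ odd (drop_level p r (lam (h y'))) -> mul y y' <= 1) ->
  levelable k Y.
Proof.
move=> hr ho hadj hsimple; have hp := remove_levels_ge3.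
apply: (leveling_transfer (p' := p - 1) hlev h_inj hadj hsimple).
- by move=> t; apply: drop_level_ok.
- by move=> t t'; apply: drop_level_even_inj.
- move=> i hi; have [hj hne <-] := drop_level_onto hi hr.
  have [u hu] := leveling_onto hlev hj.
  have [|y hy] := h_onto (u := u); last by exists y; rewrite hy hu.
  by apply: contraTneq ho => <-; rewrite hu odd_2n (negbTE hne).
- by have := remove_nv; have := leveling_nv hlev; lia.
Qed.

End RemoveVertex.

Lemma levelable_del_isolated k X Y :
  del_isolated X Y -> k + 2 <= nv Y -> levelable k X -> levelable k Y.
Proof.
case=> x [_ [f [finj [fsurj fmul]]]] hnv [lam [p hlev]].
pose h y := odflt x [pick u | (u != x) && (f u == y)].
have hspec y : h y != x /\ f (h y) = y.
  rewrite /h; case: pickP => [u /andP[hu /eqP hf] //|hnone].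
  by have [u hu hf] := fsurj y; move: (hnone u); rewrite hu hf eqxx.
have h_inj : injective h by move=> y y' e; rewrite -(hspec y).2 -(hspec y').2 e.
have h_onto u : u != x -> exists y, h y = u.
  by move=> hu; exists (f u); apply: finj => //; [apply: (hspec _).1 | apply: (hspec _).2].
have hmul y y' : mul y y' = mul (h y) (h y').
  by rewrite -{1}(hspec y).2 -{1}(hspec y').2 fmul //; apply: (hspec _).1.
have h_miss y : h y != x := (hspec y).1.
have [hx|/negbTE hx] := boolP (odd (lam x)).
  apply: (levelable_remove_odd hlev h_inj h_miss h_onto hx) => y y'; rewrite hmul.
    exact: (leveling_adj hlev).
  exact: (leveling_simple hlev).
have [r hr] : exists r, lam x = 2 * r by exists (lam x)./2; rewrite -even_half ?hx.
have hrp : r < p by move: (leveling_range hlev x); rewrite /level_ok hr odd_2n; lia.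
apply: (levelable_remove_level hlev h_inj h_miss h_onto hnv hrp); first by rewrite hr eqxx orbT.
  have hp := remove_levels_ge3 hlev h_inj h_miss hnv.
  move=> y y'; rewrite hmul => /(leveling_adj hlev); apply: drop_level_ndist => //;
  exact: (leveling_range hlev).
move=> y y'; rewrite !odd_drop_level !negbK hmul => /andP[hy _] /andP[hy' _].
exact: (leveling_simple hlev hy hy').
Qed.

Lemma sum_pos_witness (T : finType) (P : pred T) (F : T -> nat) :
  0 < \sum_(i | P i) F i -> exists2 i, P i & 0 < F i.
Proof.
rewrite lt0n sum_nat_eq0 negb_forall => /existsP[i].
by rewrite negb_imply -lt0n => /andP[]; exists i.
Qed.

Section Contraction.
Variables (k : nat) (X Y : mgraph) (f : 'I_(nv X) -> 'I_(nv Y)) (c o : 'I_(nv X)).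
Variables (lam : 'I_(nv X) -> nat) (p : nat).
Hypothesis hlev : leveling k lam p.
Hypothesis hco_adj : 0 < mul c o.
Hypothesis f_onto : forall y, exists u, f u = y.
Hypothesis fco : f c = f o.
Hypothesis f_fiber : forall u w, f u = f w -> [\/ u = w, u = c /\ w = o | u = o /\ w = c].
Hypothesis f_mul : forall x y, x != y -> mul x y = \sum_(u | f u == x) \sum_(w | f w == y) mul u w.
Hypothesis hnv : k + 2 <= nv Y.

Let hco : c != o.
Proof. by apply: contraTneq hco_adj => ->; rewrite mul_irr. Qed.

Definition contract_section (y : 'I_(nv Y)) : 'I_(nv X) :=
  if y == f c then c else odflt c [pick u | f u == y].
Local Notation h := contract_section.

Lemma contract_sectionK y : f (h y) = y.
Proof.
rewrite /h; case: eqP => [->//|_]; case: pickP => [u /eqP //|hnone].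
by have [u hu] := f_onto y; move: (hnone u); rewrite hu eqxx.
Qed.

Lemma contract_section_f u : u != o -> h (f u) = u.
Proof.
move=> hu; rewrite /h; case: eqP => [/f_fiber[->|[-> _]|[eu _]] //|hne].
  by rewrite eu eqxx in hu.
case: pickP => [v /eqP /f_fiber[//|[_ ev]|[_ ev]]|/(_ u)]; last by rewrite eqxx.
  by rewrite ev eqxx in hu.
by rewrite ev in hne.
Qed.

Lemma contract_section_miss y : h y != o.
Proof.
rewrite /h; case: ifP => [_|/eqP ne]; first exact: hco.
by case: pickP => [v /eqP ev|_] //=; apply/eqP => evo; apply: ne; rewrite -ev evo fco.
Qed.

Lemma contract_section_inj : injective h.
Proof. by move=> y y' e; rewrite -[y]contract_sectionK e contract_sectionK. Qed.

Lemma contract_section_onto u : u != o -> exists y, h y = u.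
Proof. by move=> hu; exists (f u); apply: contract_section_f. Qed.

Lemma contract_fiber_sum (F : 'I_(nv X) -> nat) y :
  \sum_(u | f u == y) F u = F (h y) + (y == f c) * F o.
Proof.
have [->|hy] := eqVneq y (f c); last first.
  rewrite mul0n addn0; apply: big_pred1 => u /=; apply/eqP/eqP => [fu|->].
    by rewrite -fu contract_section_f //; apply: contraNneq hy => uo; rewrite -fu uo fco.
  exact: contract_sectionK.
rewrite mul1n /h eqxx (bigD1 c) //=; congr (_ + _); apply: big_pred1 => u /=.
apply/andP/eqP => [[/eqP/f_fiber[->|[->]|[-> _]] //]|->]; first by rewrite eqxx.
by rewrite fco eqxx eq_sym.
Qed.

Lemma contract_fiber u : u = h (f u) \/ (u = o /\ h (f u) = c).
Proof.
have [->|hu] := eqVneq u o; last by left; rewrite contract_section_f.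
by right; rewrite /h -fco eqxx.
Qed.

Lemma contract_adj (g : nat -> nat) :
  (forall t t', level_ok p t -> level_ok p t' -> ndist t t' <= 2 -> ndist (g t) (g t') <= 2) ->
  (forall t, level_ok p t -> ndist (lam o) t <= 2 -> ndist (g (lam c)) (g t) <= 2) ->
  forall y y', 0 < mul y y' -> ndist (g (lam (h y))) (g (lam (h y'))) <= 2.
Proof.
move=> glip gmerge y y' hyy'.
have hne : y != y' by apply: contraTneq hyy' => ->; rewrite mul_irr.
rewrite f_mul // in hyy'; move: hyy' => /sum_pos_witness[u /eqP fu] /sum_pos_witness[w /eqP fw].
subst y y' => /(leveling_adj hlev); have ok := leveling_range hlev.
have [eu|[eu ->]] := contract_fiber u; have [ew|[ew ->]] := contract_fiber w.
- by rewrite -eu -ew; apply: glip (ok _) (ok _).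
- by rewrite -eu ew ndistC (ndistC (g _)); apply: gmerge (ok _).
- by rewrite eu -ew; apply: gmerge (ok _).
- by rewrite eu ew eqxx in hne.
Qed.

Lemma contract_simple (g : nat -> nat) :
  (forall t, ~~ odd (g t) -> ~~ odd t) ->
  (forall w, w != c -> w != o -> ~~ odd (g (lam c)) -> ~~ odd (g (lam w)) ->
     mul c w + mul o w <= 1) ->
  forall y y', ~~ odd (g (lam (h y))) -> ~~ odd (g (lam (h y'))) -> mul y y' <= 1.
Proof.
move=> geven gmerge.
suff hyc y y' : y != y' -> y' != f c -> ~~ odd (g (lam (h y))) -> ~~ odd (g (lam (h y'))) ->
    mul y y' <= 1.
  move=> y y' hy hy'; have [<-|hne] := eqVneq y y'; first by rewrite mul_irr.
  have [ey'|hy'c] := eqVneq y' (f c); last exact: hyc.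
  rewrite mul_sym; apply: hyc => //; first by rewrite eq_sym.
  by rewrite -ey'.
move=> hne hy' gy gy'; rewrite f_mul // (eq_bigr (fun u => mul u (h y') + (y' == f c) * mul u o));
  last by move=> u _; rewrite contract_fiber_sum.
rewrite contract_fiber_sum (negbTE hy') !mul0n !addn0.
have [ey|hy] := eqVneq y (f c); last first.
  by rewrite mul0n addn0; apply: (leveling_simple hlev); apply: geven.
have hc : h y = c by rewrite ey /h eqxx.
rewrite mul1n hc; apply: gmerge; rewrite -?hc //.
  by rewrite (inj_eq contract_section_inj) eq_sym.
exact: contract_section_miss.
Qed.

Let h_inj := contract_section_inj.
Let h_miss := contract_section_miss.
Let h_onto := contract_section_onto.

Lemma levelable_contract_same : lam c = lam o -> levelable k Y.
Proof.
move=> e; have hc : odd (lam c).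
  by apply/negPn/negP => hc; move: hco; rewrite (leveling_inj hlev hc e) eqxx.
apply: (levelable_remove_odd hlev h_inj h_miss h_onto); first by rewrite -e.
  by apply: (contract_adj (g := id)) => // t _; rewrite -e.
by apply: (contract_simple (g := id)) => // w _ _; rewrite hc.
Qed.

Lemma levelable_contract_merge r : r < p -> odd (lam c) -> odd (lam o) || (lam o == 2 * r) ->
  drop_level p r (lam c) = drop_level p r (lam o) -> levelable k Y.
Proof.
move=> hr hc ho e; have hp := remove_levels_ge3 hlev h_inj h_miss hnv.
have ok := leveling_range hlev.
apply: (levelable_remove_level hlev h_inj h_miss h_onto hnv hr ho).
  apply: contract_adj => [t t' ht ht'|t ht]; first exact: drop_level_ndist.
  by rewrite e; apply: drop_level_ndist.
apply: contract_simple => [t|w _ _]; first by rewrite odd_drop_level negbK => /andP[].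
by rewrite odd_drop_level hc.
Qed.

Lemma levelable_contract_even r : lam c + 2 = lam o -> lam o = 2 * r -> levelable k Y.
Proof.
move=> eco eo; have hp := remove_levels_ge3 hlev h_inj h_miss hnv.
have ok := leveling_range hlev.
have hr : r < p by move: (ok o); rewrite /level_ok eo odd_2n; lia.
have ec : lam c = 2 * r - 2 by lia.
apply: (levelable_remove_level hlev h_inj h_miss h_onto hnv hr); first by rewrite eo eqxx orbT.
  apply: contract_adj => [t t' ht ht'|t ht hd]; first exact: drop_level_ndist.
  by rewrite ec; apply: drop_level_pred; rewrite // 1?ndistC -?eo //; lia.
apply: contract_simple => [t|w hwc hwo _]; first by rewrite odd_drop_level negbK => /andP[].
rewrite odd_drop_level negbK => /andP[hw hwr].
have hc : ~~ odd (lam c) by rewrite ec (_ : 2 * r - 2 = 2 * (r - 1)) ?odd_2n //; lia.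
have [->|pc] := posnP (mul c w).
  by rewrite add0n; apply: (leveling_simple hlev); rewrite ?eo ?odd_2n.
have [->|po] := posnP (mul o w); first by rewrite addn0; apply: (leveling_simple hlev).
move: (leveling_adj hlev pc) (leveling_adj hlev po) hwr.
rewrite ec eo (even_half hw) /ndist => h1 h2 h3.
have ewc : lam w = lam c by rewrite ec (even_half hw); move/eqP: h3; lia.
by move: hwc; rewrite (leveling_inj hlev hc (esym ewc)) eqxx.
Qed.

Lemma levelable_contract_oriented :
  odd (lam o) ==> odd (lam c) -> (odd (lam c) == odd (lam o)) ==> (lam c <= lam o) ->
  levelable k Y.
Proof.
move=> hpar hle; have [e|hne] := eqVneq (lam c) (lam o); first exact: levelable_contract_same.
have hd := leveling_adj hlev hco_adj; have ok := leveling_range hlev.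
have hok := ok o; move: hpar hle hne hd hok.
case: (nat_parity (lam c)) => [[a ea]|[a ea]]; case: (nat_parity (lam o)) => [[b eb]|[b eb]];
  rewrite ea eb /level_ok /ndist ?odd_2n ?odd_2n1 //= => _ hle /eqP hne hd hok.
- by apply: (levelable_contract_even (r := b)); lia.
- apply: (levelable_contract_merge (r := b)); rewrite ?ea ?eb ?odd_2n1 ?eqxx ?orbT //; first lia.
  by apply: drop_level_near; rewrite ?odd_2n1 // /ndist; lia.
- apply: (levelable_contract_merge (r := a.+1)); rewrite ?ea ?eb ?odd_2n1 //; first lia.
  rewrite (@drop_level_near p a.+1 (2 * b + 1)) ?odd_2n1 /ndist; try lia.
  by rewrite drop_level_near ?odd_2n1 /ndist //; lia.
Qed.

End Contraction.

Lemma levelable_contract k X Y : contract X Y -> k + 2 <= nv Y -> levelable k X -> levelable k Y.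
Proof.
case=> a [b [hab [f [f_onto [fab [f_fiber f_mul]]]]]] hnv [lam [p hlev]].
have hab0 : 0 < mul a b by rewrite hab.
have f_fiber' u w : f u = f w -> [\/ u = w, u = b /\ w = a | u = a /\ w = b].
  by move/f_fiber => [] ?; [apply: Or31 | apply: Or33 | apply: Or32].
have [hpar|] := boolP ((odd (lam b) ==> odd (lam a)) &&
                       ((odd (lam a) == odd (lam b)) ==> (lam a <= lam b))).
  by case/andP: hpar; apply: levelable_contract_oriented hlev hab0 f_onto fab f_fiber f_mul hnv.
rewrite negb_and !negb_imply => hpar.
have hba0 : 0 < mul b a by rewrite mul_sym.
apply: (levelable_contract_oriented hlev hba0 f_onto (esym fab) f_fiber' f_mul hnv).
  by case/orP: hpar => [/andP[-> _]|/andP[/eqP -> _]]; [rewrite implybT | apply/implyP].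
case/orP: hpar => [/andP[-> /negbTE -> //]|/andP[_]].
by rewrite -ltnNge => /ltnW ->; rewrite implybT.
Qed.

Lemma levelable_minor_step k X Y :
  minor_step X Y -> k + 2 <= nv Y -> levelable k X -> levelable k Y.
Proof.
case=> [[f [fb hm]] _|[f [fb [a [b [_ hm]]]]] _|hdel|hcontr].
- by apply: (levelable_bij fb) => u w; rewrite hm.
- by apply: (levelable_bij fb) => u w; rewrite hm leq_subr.
- exact: levelable_del_isolated.
- exact: levelable_contract.
Qed.

Lemma levelable_minor k G H : is_minor G H -> k + 2 <= nv G -> levelable k H -> levelable k G.
Proof.
elim=> // X X' st hm IH hk hX; apply: IH => //.
by apply: (levelable_minor_step st) => //; apply: leq_trans hk (is_minor_nv hm).
Qed.

Lemma ohead_rev (T : Type) (x : T) s : ohead (rev (x :: s)) = Some (last x s).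
Proof. by rewrite lastI rev_rcons. Qed.

Lemma last_take (T : Type) (x : T) s i : i <= size s -> last x (take i s) = nth x (x :: s) i.
Proof. by elim: s x i => [|y s IH] x [|i] //= hi; rewrite IH // (set_nth_default y). Qed.

Section ParadeLeveling.
Variables (H : mgraph) (x0 : 'I_(nv H)) (s0 : seq 'I_(nv H)) (ls : seq nat).
Hypothesis husp : is_usp (x0 :: s0) ls.

Local Notation N := (nv H).
Local Notation P i := (nth x0 (x0 :: s0) i).

Lemma parade_labels : size ls = size s0 /\ forall j, j < size s0 -> nth 0 ls j < mul (P j) (P j.+1).
Proof.
have [[_ _ hs /(all_stepsP x0 hs) hlab] _] := husp.
by split=> // j hj; apply: hlab; rewrite hs.
Qed.

Lemma parade_path : path (@adj H) x0 s0.
Proof.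
apply/(pathP x0) => j hj; apply: leq_ltn_trans (leq0n _) _.
exact: parade_labels.2 j hj.
Qed.

Lemma parade_size : size s0 < N.
Proof. exact: path_size_le husp.1. Qed.

Lemma walk_on_parade s : path (@adj H) x0 s -> last x0 s = last x0 s0 -> size s <= size s0 ->
  size s = size s0 /\ {subset s <= s0}.
Proof.
move=> /shortenP[s' ps' us' sub] hl hsz.
have hp : is_path (x0 :: s') (nseq (size s') 0).
  split=> //; first by rewrite size_nseq.
  apply/(all_stepsP x0); rewrite size_nseq // => j hj; rewrite nth_nseq hj.
  exact: (pathP x0 ps').
have hends : same_ends (x0 :: s0) (x0 :: s') by split; rewrite //= !ohead_rev hl.
have [/= hle heq] := husp.2 _ _ hp hends.
have us1 : uniq s' by case/andP: us'.
have h1 : size s' <= size s by apply: uniq_leq_size.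
have hs' : size s' = size s0 by apply/eqP; rewrite eqn_leq (leq_trans h1 hsz) -ltnS.
have [[es] _] := heq (congr1 S hs'); subst s'.
have [|_ hi] := uniq_min_size us1 sub; first exact: hsz.
by split=> [|z]; [apply/eqP; rewrite eqn_leq hsz | rewrite hi].
Qed.

Definition reach d v := exists s, [/\ path (@adj H) x0 s, last x0 s = v & size s = d].

Definition wdist v : nat := find (fun d => `[< reach d v >]) (iota 0 N).

Lemma wdist_le d v : reach d v -> d < N -> wdist v <= d.
Proof.
move=> hr hd; rewrite leqNgt; apply/negP => /(before_find 0).
by rewrite nth_iota // add0n => /asboolP.
Qed.

Lemma wdist_leN v : wdist v <= N.
Proof. by rewrite -[X in _ <= X](size_iota 0 N) find_size. Qed.

Lemma wdist_reach v : wdist v < N -> reach (wdist v) v.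
Proof.
move=> hv; have := @nth_find _ 0 (fun d => `[< reach d v >]) (iota 0 N).
by rewrite has_find size_iota nth_iota // add0n => /(_ hv)/asboolP.
Qed.

Lemma reach_parade i : i <= size s0 -> reach i (P i).
Proof.
move=> hi; exists (take i s0).
by split; [exact: take_path parade_path | exact: last_take | exact: size_takel].
Qed.

Lemma parade_suffix_path i : i <= size s0 ->
  path (@adj H) (P i) (drop i s0) /\ last (P i) (drop i s0) = last x0 s0.
Proof.
move=> hi; have := parade_path.
rewrite -{1}(cat_take_drop i s0) cat_path last_take // => /andP[_ h].
by split=> //; rewrite -(last_take x0 hi) -last_cat cat_take_drop.
Qed.

Lemma wdist_parade i : i <= size s0 -> wdist (P i) = i.
Proof.
move=> hi; have hN := parade_size.
have h1 : wdist (P i) <= i by apply: wdist_le; [exact: reach_parade | lia].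
apply/eqP; rewrite eqn_leq h1 leqNgt; apply/negP => hlt.
have [s1 [p1 l1 z1]] := wdist_reach (leq_ltn_trans h1 (leq_ltn_trans hi hN)).
have [p2 l2] := parade_suffix_path hi.
have := @walk_on_parade (s1 ++ drop i s0); rewrite cat_path p1 l1 p2 last_cat l1 l2.
by rewrite size_cat size_drop z1 => /(_ erefl erefl)[]; lia.
Qed.

Lemma wdist_adj u w : adj u w -> wdist w <= (wdist u).+1.
Proof.
move=> huw; have [hN|] := ltnP (wdist u) N; last by move/(leq_trans (wdist_leN w))/leqW.
have [s1 [p1 l1 z1]] := wdist_reach hN.
have [hN'|] := ltnP (wdist u).+1 N; last exact: leq_trans (wdist_leN w).
apply: wdist_le => //; exists (rcons s1 w).
by rewrite rcons_path p1 l1 last_rcons size_rcons z1.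
Qed.

Lemma wdist_on_parade v : v \in x0 :: s0 -> wdist v <= size s0 /\ P (wdist v) = v.
Proof.
move=> hv; have hi : index v (x0 :: s0) <= size s0 by rewrite -ltnS index_mem.
have := wdist_parade hi; rewrite nth_index // => ->.
by split=> //; apply: nth_index.
Qed.

Lemma wdist_off_parade w v : w \notin x0 :: s0 -> v \in x0 :: s0 -> adj w v -> wdist v <= wdist w.
Proof.
move=> hw /wdist_on_parade[hj <-]; move: (wdist v) hj => j hj hwj.
rewrite wdist_parade // leqNgt; apply/negP => hlt; have hN := parade_size.
have [s1 [p1 l1 z1]] := wdist_reach (leq_trans hlt (leq_trans hj (ltnW hN))).
have [p2 l2] := parade_suffix_path hj.
have := @walk_on_parade (rcons s1 (P j) ++ drop j s0).
rewrite cat_path rcons_path p1 l1 hwj last_rcons p2 last_cat last_rcons l2.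
rewrite size_cat size_rcons size_drop z1 => /(_ erefl erefl)[|_ hsub]; first lia.
have : w \in x0 :: s1 by rewrite -l1 mem_last.
rewrite inE => /orP[/eqP ew|hw1]; first by rewrite ew mem_head in hw.
by move: hw; rewrite inE hsub ?orbT // mem_cat mem_rcons inE hw1 orbT.
Qed.

Lemma wdist_off_gt0 w : w \notin x0 :: s0 -> 0 < wdist w.
Proof.
move=> hw; rewrite lt0n; apply/eqP => h0.
have [s1 [_ l1 z1]] := wdist_reach (leq_ltn_trans (eq_leq h0) (nv_gt0 H)).
by move: hw; rewrite -l1 (size0nil (etrans z1 h0)) mem_head.
Qed.

Lemma parade_step_simple i : i < size s0 -> mul (P i) (P i.+1) <= 1.
Proof.
(* Relabelling step i along a second parallel edge would give another shortest path. *)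
move=> hi; rewrite leqNgt; apply/negP => h2.
have [hls hlab] := parade_labels.
pose ls' := set_nth 0 ls i (nth 0 ls i == 0).
have hsz : size ls' = size s0 by rewrite /ls' size_set_nth hls; lia.
have hp : is_path (x0 :: s0) ls'.
  have [[h1 h2' _ _] _] := husp; split=> //.
  apply/(all_stepsP x0) => //= j hj; rewrite /ls' nth_set_nth /=.
  case: eqP => [->|_]; last by apply: hlab; rewrite -hsz.
  by apply: leq_ltn_trans h2; case: (_ == 0).
have [_ /(_ erefl)[_ e']] := husp.2 _ _ hp (conj erefl erefl).
move: (congr1 (fun l => nth 0 l i) e'); rewrite /ls' nth_set_nth /= eqxx.
by case: (nth 0 ls i).
Qed.

Hypothesis hs0 : 0 < size s0.

(* A vertex off the parade at walk distance d lies between parade vertices d-1 and d. *)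
Definition parade_level v : nat := 2 * minn (wdist v) (size s0) - (v \notin x0 :: s0).

Lemma odd_parade_level v : odd (parade_level v) = (v \notin x0 :: s0).
Proof.
rewrite /parade_level; have [hv|hv] /= := boolP (v \notin x0 :: s0).
  have := wdist_off_gt0 hv => hd.
  by rewrite (_ : _ - 1 = 2 * (minn (wdist v) (size s0) - 1) + 1) ?odd_2n1 //; lia.
by rewrite subn0 odd_2n.
Qed.

Lemma parade_level_adj u w : 0 < mul u w -> ndist (parade_level u) (parade_level w) <= 2.
Proof.
move=> huw; have hwu : 0 < mul w u by rewrite mul_sym.
have h1 := wdist_adj huw; have h2 := wdist_adj hwu.
rewrite /parade_level /ndist.
have [hu|hu] := boolP (u \in x0 :: s0); have [hw|hw] := boolP (w \in x0 :: s0) => /=.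
- lia.
- by have := wdist_off_parade hw hu hwu; lia.
- by have := wdist_off_parade hu hw huw; lia.
- lia.
Qed.

Lemma parade_level_simple u w :
  ~~ odd (parade_level u) -> ~~ odd (parade_level w) -> mul u w <= 1.
Proof.
rewrite !odd_parade_level !negbK => /wdist_on_parade[hu <-] /wdist_on_parade[hw <-].
have [->|huw] := posnP (mul (P (wdist u)) (P (wdist w))) => //.
have h1 := wdist_adj huw; rewrite mul_sym in huw; have h2 := wdist_adj huw.
move: h1 h2; rewrite !(wdist_parade hu, wdist_parade hw) => h1 h2.
have [<-|] := eqVneq (wdist u) (wdist w); first by rewrite mul_irr.
rewrite neq_ltn => /orP[] hlt.
  by rewrite (_ : wdist w = (wdist u).+1) ?parade_step_simple //; lia.
by rewrite mul_sym (_ : wdist u = (wdist w).+1) ?parade_step_simple //; lia.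
Qed.

Lemma parade_level_inj u w :
  ~~ odd (parade_level u) -> parade_level u = parade_level w -> u = w.
Proof.
move=> hu e; have hw : ~~ odd (parade_level w) by rewrite -e.
move: hu hw e; rewrite !odd_parade_level !negbK /parade_level => hu hw; rewrite hu hw !subn0.
have [hdu pu] := wdist_on_parade hu; have [hdw pw] := wdist_on_parade hw.
rewrite (minn_idPl hdu) (minn_idPl hdw) => e.
by rewrite -pu (_ : wdist u = wdist w) ?pw //; lia.
Qed.

Lemma parade_level_range v : level_ok (size s0).+1 (parade_level v).
Proof.
rewrite /level_ok odd_parade_level /parade_level.
have [hv|/negPn hv] /= := boolP (v \notin x0 :: s0).
  by have := wdist_off_gt0 hv; lia.
by have [hd _] := wdist_on_parade hv; lia.
Qed.

Lemma parade_level_onto i : i < (size s0).+1 -> exists v, parade_level v = 2 * i.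
Proof.
move=> hi; exists (P i); have hP : P i \in x0 :: s0 by apply: mem_nth.
by rewrite /parade_level hP subn0 wdist_parade // (minn_idPl _).
Qed.

Lemma parade_leveling k : nv H <= (size s0).+1 + k -> leveling k parade_level (size s0).+1.
Proof.
by split; [exact: parade_level_adj | exact: parade_level_simple | exact: parade_level_inj
         | exact: parade_level_range | exact: parade_level_onto |].
Qed.

End ParadeLeveling.

Lemma ohead_nth (T : eqType) (x : T) s t : ohead s = ohead t -> t != [::] -> nth x s 0 = nth x t 0.
Proof. by case: t => // y t; case: s => //= z s [->]. Qed.

Lemma ohead_rev_nth (T : eqType) (x : T) s t : ohead (rev s) = ohead (rev t) -> t != [::] ->
  nth x s (size s).-1 = nth x t (size t).-1.
Proof.
case/lastP: t => // t y; case/lastP: s => [|s z]; rewrite !rev_rcons //= => [[->]] _.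
by rewrite !nth_rcons !size_rcons /= !ltnn !eqxx.
Qed.

Lemma slow_walk_length (f : nat -> nat) n p : 0 < n ->
  (forall j, j.+1 < n -> ndist (f j) (f j.+1) <= 2) -> f 0 = 0 -> f n.-1 = 2 * p.-1 ->
  p <= n /\ (n = p -> forall j, j < p -> f j = 2 * j).
Proof.
move=> hn hstep h0 hlast.
have up j : j < n -> f j <= 2 * j.
  elim: j => [|j IH] hj; first by rewrite h0.
  by have := hstep j hj; have := IH (ltnW hj); rewrite /ndist; lia.
have down d : d < n -> 2 * p.-1 <= f (n.-1 - d) + 2 * d.
  elim: d => [|d IH] hd; first by rewrite subn0 hlast addn0.
  have e : n.-1 - d = (n.-1 - d.+1).+1 by lia.
  by have := hstep (n.-1 - d.+1) ltac:(lia); rewrite -e; have := IH (ltnW hd); rewrite /ndist; lia.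
have hpn : p <= n by have := up n.-1 ltac:(lia); rewrite hlast; lia.
split=> // enp j hj; have := up j ltac:(lia); have := down (p.-1 - j) ltac:(lia).
by rewrite (_ : n.-1 - (p.-1 - j) = j); lia.
Qed.

Section CanonicalGraph.
Variables (G : mgraph) (lam : 'I_(nv G) -> nat) (p m : nat).
Hypothesis lam_inj : forall u w, ~~ odd (lam u) -> lam u = lam w -> u = w.
Hypothesis lam_range : forall u, level_ok p (lam u).
Hypothesis lam_onto : forall i, i < p -> exists u, lam u = 2 * i.
Hypothesis hp2 : 2 <= p.
Hypothesis hm : 1 <= m.

(* The largest multigraph compatible with the leveling [lam]. *)
Definition canon_mul (u w : 'I_(nv G)) : nat :=
  if u == w then 0 else
  if ~~ odd (lam u) && ~~ odd (lam w) then (if ndist (lam u) (lam w) == 2 then 1 else 0)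
  else (if ndist (lam u) (lam w) <= 2 then m else 0).

Lemma canon_mul_sym u w : canon_mul u w = canon_mul w u.
Proof. by rewrite /canon_mul eq_sym ndistC andbC. Qed.

Lemma canon_mul_irr u : canon_mul u u = 0.
Proof. by rewrite /canon_mul eqxx. Qed.

Definition canon_graph := MGraph canon_mul_sym canon_mul_irr (nv_gt0 G).

Let v0 : 'I_(nv G) := Ordinal (nv_gt0 G).

Definition level_vertex i : 'I_(nv G) := odflt v0 [pick u | lam u == 2 * i].

Lemma lam_level_vertex i : i < p -> lam (level_vertex i) = 2 * i.
Proof.
move=> hi; rewrite /level_vertex; case: pickP => [u /eqP //|hnone].
by have [u hu] := lam_onto hi; move: (hnone u); rewrite hu eqxx.
Qed.

Lemma even_level_lt u : ~~ odd (lam u) -> exists2 q, lam u = 2 * q & q < p.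
Proof.
move=> hu; exists (lam u)./2; first exact: even_half.
by move: (lam_range u); rewrite /level_ok (negbTE hu) {1}(even_half hu); lia.
Qed.

Lemma level_vertexP u q : lam u = 2 * q -> q < p -> u = level_vertex q.
Proof. by move=> hu hq; apply: lam_inj; rewrite ?hu ?odd_2n ?lam_level_vertex. Qed.

Lemma level_vertex_inj i j : i < p -> j < p -> level_vertex i = level_vertex j -> i = j.
Proof. by move=> hi hj /(congr1 lam); rewrite !lam_level_vertex //; lia. Qed.

Lemma level_vertex_eq i j : i < p -> j < p -> (level_vertex i == level_vertex j) = (i == j).
Proof. by move=> hi hj; apply/eqP/eqP => [/level_vertex_inj|->]; [apply | ]. Qed.

Definition canon_parade : seq 'I_(nv G) := map level_vertex (iota 0 p).

Lemma size_canon_parade : size canon_parade = p.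
Proof. by rewrite size_map size_iota. Qed.

Lemma nth_canon_parade i : i < p -> nth v0 canon_parade i = level_vertex i.
Proof. by move=> hi; rewrite (nth_map 0) ?size_iota // nth_iota. Qed.

Lemma mem_canon_parade u : (u \in canon_parade) = ~~ odd (lam u).
Proof.
apply/mapP/idP => [[i]|/even_level_lt[q hq hqp]]; last first.
  by exists q; [rewrite mem_iota add0n hqp | apply: level_vertexP].
by rewrite mem_iota add0n => /andP[_ hi] ->; rewrite lam_level_vertex // odd_2n.
Qed.

Lemma uniq_canon_parade : uniq canon_parade.
Proof.
rewrite map_inj_in_uniq ?iota_uniq // => i j; rewrite !mem_iota !add0n => /andP[_ hi] /andP[_ hj].
exact: level_vertex_inj.
Qed.

Lemma canon_mul_ndist u w : 0 < canon_mul u w -> ndist (lam u) (lam w) <= 2.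
Proof.
rewrite /canon_mul; case: eqP => // _; case: ifP => _; case: ifP => h // _.
by rewrite (eqP h).
Qed.

Lemma canon_mul_step i : i.+1 < p -> canon_mul (level_vertex i) (level_vertex i.+1) = 1.
Proof.
move=> hi; have hne : level_vertex i != level_vertex i.+1.
  by apply/eqP => /level_vertex_inj; lia.
rewrite /canon_mul (negbTE hne) !lam_level_vertex ?odd_2n /=; try lia.
by rewrite ifT //; apply/eqP; rewrite /ndist; lia.
Qed.

Lemma canon_parade_path : is_path (G := canon_graph) canon_parade (nseq p.-1 0).
Proof.
have hs : size (nseq p.-1 0) = (size canon_parade).-1 by rewrite size_nseq size_canon_parade.
split=> //; first by rewrite -size_eq0 size_canon_parade; lia.
  exact: uniq_canon_parade.
apply/(@all_stepsP canon_graph _ _ v0 hs) => j; rewrite size_nseq => hj.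
by rewrite nth_nseq hj !nth_canon_parade /= ?canon_mul_step //; lia.
Qed.

Lemma canon_parade_usp : is_usp (G := canon_graph) canon_parade (nseq p.-1 0).
Proof.
split=> [|vs ls [vs_nil _ hsz hsteps] [hhead hlast]]; first exact: canon_parade_path.
have hP : canon_parade != [::] by rewrite -size_eq0 size_canon_parade; lia.
have hlab := elimT (@all_stepsP canon_graph vs ls v0 hsz) hsteps.
have hstep j : j.+1 < size vs -> ndist (lam (nth v0 vs j)) (lam (nth v0 vs j.+1)) <= 2.
  move=> hj; apply/canon_mul_ndist/(leq_ltn_trans (leq0n _)).
  by apply: hlab; rewrite hsz; lia.
have h0 : lam (nth v0 vs 0) = 0.
  by rewrite (ohead_nth v0 hhead hP) nth_canon_parade ?lam_level_vertex //; lia.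
have hL : lam (nth v0 vs (size vs).-1) = 2 * p.-1.
  rewrite (ohead_rev_nth v0 hlast hP) size_canon_parade.
  by rewrite nth_canon_parade ?lam_level_vertex //; lia.
have hn : 0 < size vs by rewrite lt0n size_eq0.
have [hpn heq] := slow_walk_length (f := fun j => lam (nth v0 vs j)) hn hstep h0 hL.
rewrite size_canon_parade; split=> // hsp.
have evs : vs = canon_parade.
  apply: (@eq_from_nth _ v0); first by rewrite size_canon_parade.
  move=> j hj; rewrite hsp in hj; rewrite nth_canon_parade //.
  exact: level_vertexP (heq hsp j hj) hj.
split=> //; apply: (@eq_from_nth _ 0); first by rewrite size_nseq hsz hsp.
move=> j hj; have hj' : j < p.-1 by rewrite -hsp -hsz.
move: (hlab j hj); rewrite nth_nseq hj' evs !nth_canon_parade /= ?canon_mul_step; lia.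
Qed.

Lemma canon_adj u w : odd (lam u) || odd (lam w) -> u != w ->
  (0 < canon_mul u w) = (ndist (lam u) (lam w) <= 2).
Proof.
move=> ho hne; rewrite /canon_mul (negbTE hne) -negb_or ho /=.
by case: ifP; rewrite ?hm.
Qed.

Lemma canon_parade_steps i : i.+1 < p ->
  ((level_vertex i, level_vertex i.+1), 0) \in steps canon_parade (nseq p.-1 0).
Proof.
move=> hi; apply/(nthP ((v0, v0), 0)); exists i.
  by rewrite /steps !size_zip size_behead size_nseq size_canon_parade; lia.
rewrite /steps nth_zip_cond !size_zip size_behead size_nseq size_canon_parade ifT; last lia.
rewrite nth_zip_cond size_zip size_behead size_canon_parade ifT /=; last lia.
by rewrite nth_behead !nth_canon_parade ?nth_nseq ?ifT //; lia.
Qed.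

Lemma canon_spectator v : v \notin canon_parade ->
  #|[set x | (x \in canon_parade) && (0 < canon_mul v x)]| = 2 /\
  forall x y, x \in canon_parade -> y \in canon_parade -> 0 < canon_mul v x -> 0 < canon_mul v y ->
    x != y -> 0 < canon_mul x y.
Proof.
rewrite mem_canon_parade negbK => hv.
have [[q eq]|[e ev]] := nat_parity (lam v); first by rewrite eq odd_2n in hv.
have he : e.+1 < p by move: (lam_range v); rewrite /level_ok hv ev; lia.
have hx x : x \in canon_parade ->
    (0 < canon_mul v x) = (x == level_vertex e) || (x == level_vertex e.+1).
  rewrite mem_canon_parade => hx.
  have hne : v != x by apply/eqP => evx; rewrite -evx hv in hx.
  rewrite canon_adj ?hv // ev; have [q eq hq] := even_level_lt hx.
  have he' : e < p by lia.
  rewrite (level_vertexP eq hq) !level_vertex_eq // lam_level_vertex //.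
  by apply/idP/orP => [|[] /eqP ->]; rewrite /ndist; lia.
split.
  have -> : [set x | (x \in canon_parade) && (0 < canon_mul v x)] =
            [set level_vertex e; level_vertex e.+1].
    apply/setP => x; rewrite !inE; have [hxP|hxP] /= := boolP (x \in canon_parade); first exact: hx.
    apply/esym/negbTE; apply: contra hxP => /orP[] /eqP ->;
      by rewrite mem_canon_parade lam_level_vertex ?odd_2n //; lia.
  rewrite cards2; case: eqP => // /level_vertex_inj; lia.
move=> x y hxP hyP; rewrite (hx x hxP) (hx y hyP).
case/orP => /eqP ->; case/orP => /eqP -> //; rewrite ?eqxx // => _.
  by rewrite canon_mul_step.
by rewrite canon_mul_sym canon_mul_step.
Qed.

Lemma canon_spectators_adj u v x : u \notin canon_parade -> v \notin canon_parade -> u != v ->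
  x \in canon_parade -> 0 < canon_mul u x -> 0 < canon_mul v x -> 0 < canon_mul u v.
Proof.
rewrite !mem_canon_parade !negbK => hu hv huv hx.
have hux : u != x by apply/eqP => e; rewrite -e hu in hx.
have hvx : v != x by apply/eqP => e; rewrite -e hv in hx.
rewrite !canon_adj ?hu ?hv //.
have [[q eq]|[a ea]] := nat_parity (lam u); first by rewrite eq odd_2n in hu.
have [[q eq]|[b eb]] := nat_parity (lam v); first by rewrite eq odd_2n in hv.
have [[c ec]|[q eq]] := nat_parity (lam x); last by rewrite eq odd_2n1 in hx.
by rewrite ea eb ec /ndist; lia.
Qed.

Lemma canon_saturated a b l : l < canon_mul a b ->
  ~~ in_parade canon_parade (nseq p.-1 0) a b l -> canon_mul a b = m.
Proof.
move=> hl hnp; have hne : a != b by apply: contraTneq hl => ->; rewrite canon_mul_irr.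
have [ho|] := boolP (odd (lam a) || odd (lam b)).
  by move: hl; rewrite /canon_mul (negbTE hne) -negb_or ho /=; case: ifP.
rewrite negb_or => /andP[ha hb]; move: hl; rewrite /canon_mul (negbTE hne) ha hb /=.
case: ifP => // /eqP hd hl; have l0 : l = 0 by lia.
subst l; have [i ei hi] := even_level_lt ha; have [j ej hj] := even_level_lt hb.
move: hd hnp; rewrite ei ej /ndist /in_parade (level_vertexP ei hi) (level_vertexP ej hj) => hd.
have [eji|eij] : j = i.+1 \/ i = j.+1 by lia.
  by rewrite eji canon_parade_steps // -eji.
by rewrite eij canon_parade_steps ?orbT // -eij.
Qed.

Lemma canon_crowded : usp canon_graph = p -> sat_crowded_parade canon_graph m p.
Proof.
move=> hu; right; split=> //; exists canon_parade, (nseq p.-1 0); split.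
- by split; [exact: canon_parade_usp | rewrite size_canon_parade].
- exact: size_canon_parade.
- exact: canon_spectator.
- exact: canon_spectators_adj.
- exact: canon_saturated.
Qed.

End CanonicalGraph.

Lemma canon_mul_le (G : mgraph) (lam : 'I_(nv G) -> nat) m u w : 1 <= m -> canon_mul lam m u w <= m.
Proof. by move=> hm; rewrite /canon_mul; case: ifP => // _; case: ifP => _; case: ifP. Qed.

Lemma leveling_le_canon k (G : mgraph) (lam : 'I_(nv G) -> nat) p m :
  leveling k lam p -> (forall u w : 'I_(nv G), mul u w <= m) ->
  forall u w, mul u w <= canon_mul lam m u w.
Proof.
move=> hlev hmG u w; rewrite /canon_mul; case: eqP => [->|hne]; first by rewrite mul_irr.
have [->//|hpos] := posnP (mul u w); have hd := leveling_adj hlev hpos.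
case: ifP => [/andP[hu hw]|_]; last by rewrite hd.
have hne' : lam u != lam w by apply: contra_notN hne => /eqP/(leveling_inj hlev hu).
rewrite ifT; first exact: (leveling_simple hlev hu hw).
by move: hd hne'; rewrite (even_half hu) (even_half hw) /ndist => hd /eqP hne'; apply/eqP; lia.
Qed.

Lemma levelable_of_spfloor k G : k + 2 <= nv G -> spfloor G = k -> levelable k G.
Proof.
move=> hk hsf; have [H hGH hsH] := spfloor_witness G.
have [[|x0 s0] [ls [husp hsz]]] := parade_exists H; first by case: husp => [[]].
have := is_minor_nv hGH; have := usp_le_nv H; rewrite /sp -hsz hsf /= in hsH => hu hnv.
have hs0 : 0 < size s0 by lia.
apply: (levelable_minor hGH) => //; exists (parade_level x0 s0), (size s0).+1.
by apply: (parade_leveling husp hs0); lia.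
Qed.

Lemma maximal_leveled n m k G : k + 2 <= n -> 1 <= m -> minor_maximal (the_class n m k) G ->
  sat_crowded_parade G m (n - k).
Proof.
move=> hk hm hmax; have [[hn hmG hsf] _] := hmax.
have hkG : k + 2 <= nv G by rewrite hn.
have [lam [p hlev]] := levelable_of_spfloor hkG hsf.
have hnp := leveling_nv hlev; have hp2 : 2 <= p by lia.
have hle := leveling_le_canon hlev hmG.
pose C := canon_graph lam m.
have hkC : k <= sp C.
  rewrite -hsf; have hGC := minor_of_le_mul (canon_mul_sym lam m) (canon_mul_irr lam m) hle.
  exact: leq_trans (spfloor_minor hGC) (spfloor_le_sp (minor_refl _)).
have hpC : p <= usp C.
  rewrite -(size_canon_parade lam p); apply: usp_ge_size.
  exact: canon_parade_usp (leveling_inj hlev) (leveling_onto hlev) hp2 hm.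
have hnC : nv C = n by [].
have := usp_le_nv C; rewrite /sp hnC in hkC * => huC.
have huspC : usp C = p by lia.
have hspC : sp C <= k by rewrite /sp huspC hnC; lia.
have hmul := maximal_le_mul_eq hmax hle (fun u w => canon_mul_le lam u w hm) hspC.
rewrite (_ : n - k = p); last lia.
rewrite (mgraph_eta (canon_mul_sym lam m) (canon_mul_irr lam m) hmul).
exact: canon_crowded (leveling_inj hlev) (leveling_range hlev) (leveling_onto hlev) hp2 hm huspC.
Qed.

Lemma usp_gt0 G : 0 < usp G.
Proof. exact: usp_ge_size (is_usp_vertex (Ordinal (nv_gt0 G))). Qed.

Lemma maximal_complete n m k G : k + 1 = n -> minor_maximal (the_class n m k) G ->
  forall a b : 'I_(nv G), a != b -> mul a b = m.
Proof.
move=> hk hmax; pose M (u w : 'I_(nv G)) := if u == w then 0 else m.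
have Ms u w : M u w = M w u by rewrite /M eq_sym.
have Mi u : M u u = 0 by rewrite /M eqxx.
have [[hn hm _] _] := hmax.
have -> : @mul G = M.
  apply: (maximal_le_mul_eq (s := Ms) (i := Mi) hmax) => [u w|u w|].
  - by rewrite /M; case: eqP => [->|_]; rewrite ?mul_irr.
  - by rewrite /M; case: eqP.
  - by have := usp_gt0 (MGraph Ms Mi (nv_gt0 G)); rewrite /sp /=; lia.
by move=> a b /negbTE hab; rewrite /M hab.
Qed.

Theorem theorem7p6 (n m k : nat) (G : mgraph) :
  (k + 2 <= n /\ 1 <= m) \/ (k + 1 = n /\ 2 <= m) ->
  minor_maximal (the_class n m k) G ->
  sat_crowded_parade G m (n - k).
Proof.
case=> [[hk hm]|[hk _]] hmax; first exact: maximal_leveled hk hm hmax.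
by left; split; [lia | apply: maximal_complete hk hmax].
Qed.
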